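(* Let $\mathcal G=(V_{\min},V_{\max},E,w,\lambda)$ be a discounted payoff game. Consider the following procedure: choose an arbitrary joint strategy $\sigma$; then repeat: compute an optimal solution $\nu$ for $f_\sigma$ (a basis valuation of $H$ minimising $f_\sigma$ over all solutions of $H$); if $f_\sigma(\nu)=0$, return $\nu$; otherwise replace $\sigma$ by an arbitrary joint strategy that is better than $\sigma$. Then, for every choice of the initial joint strategy and of the better strategies, the procedure terminates, and the returned valuation is $\mathrm{val}(\mathcal G)$.
   Context: A discounted payoff game (DPG) is a tuple $\mathcal G=(V_{\min},V_{\max},E,w,\lambda)$ where $V=V_{\min}\cup V_{\max}$ is a finite set of vertices partitioned into disjoint sets $V_{\min}$ (player Min) and $V_{\max}$ (player Max), $E\subseteq V\times V$ is such that every vertex has at least one outgoing edge, $w:E\to\mathbb R$ and $\lambda:E\to[0,1)$ (write $w_e,\lambda_e$). The outcome of an infinite play $e_0e_1\ldots$ is $\sum_{i\ge0}w_{e_i}\prod_{j<i}\lambda_{e_j}$. A joint strategy is a map $\sigma:V\to V$ with $(v,\sigma(v))\in E$ for all $v$ (its restrictions to $V_{\min},V_{\max}$ being positional strategies of the two players). The value $\mathrm{val}(\mathcal G)(v)$ is $\sup_{\sigma_{\max}}\inf_{\sigma_{\min}}$ of the outcome of the play from $v$ (positional determinacy holds). $H$ is the system of inequations over $x\in\mathbb R^V$ containing, for each edge $e=(v,v')$, $x(v)\ge w_e+\lambda_e x(v')$ if $v\in V_{\max}$ and $x(v)\le w_e+\lambda_e x(v')$ if $v\in V_{\min}$. $\mathsf{offset}(x,(v,v'))=x(v)-(w_{(v,v')}+\lambda_{(v,v')}x(v'))$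 if $v\in V_{\max}$, and $(w_{(v,v')}+\lambda_{(v,v')}x(v'))-x(v)$ otherwise. For a joint strategy $\sigma$, $f_\sigma(x)=\sum_{v\in V}\mathsf{offset}(x,(v,\sigma(v)))$. A basis of $H$ is a set of $|V|$ inequations of $H$ whose equality versions have a unique common solution; if that solution satisfies $H$ it is the basis valuation. A joint strategy $\sigma'$ is better than $\sigma$ iff $\min\{f_{\sigma'}(x)\mid x \text{ solves } H\}<\min\{f_{\sigma}(x)\mid x\text{ solves } H\}$. *)

From HB Require Import structures.
From mathcomp Require Import all_boot all_order all_algebra.
From mathcomp Require Import all_classical all_reals all_analysis.
Set Implicit Arguments. Unset Strict Implicit. Unset Printing Implicit Defensive.
Import Order.TTheory GRing.Theory Num.Theory numFieldNormedType.Exports.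
Local Open Scope ring_scope.
Local Open Scope classical_set_scope.

(* V_max = [pred v | isMax G v], V_min = its complement.  Weights w G v v', discounts lam G v v'
   (only relevant on edges). *)
Record dpg (R : realType) (V : finType) := DPG {
  isMax : pred V;
  edge : rel V;
  w : V -> V -> R;
  lam : V -> V -> R }.

Definition wf_dpg (R : realType) (V : finType) (G : dpg R V) : Prop :=
  (forall v, exists v', edge G v v') /\
  (forall v v', edge G v v' -> 0 <= lam G v v' < 1).

Section Game.
Context {R : realType} {V : finType} (G : dpg R V).

Definition joint_strategy (s : V -> V) : Prop := forall v, edge G v (s v).
(* positional strategies of Max / Min (values at other vertices irrelevant) *)
Definition max_strategy (s : V -> V) : Prop := forall v, isMax G v -> edge G v (s v).
Definition min_strategy (s : V -> V) : Prop := forall v, ~~ isMax G v -> edge G v (s v).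
Definition join_strat (smax smin : V -> V) : V -> V :=
  fun v => if isMax G v then smax v else smin v.

Definition play (s : V -> V) (v : V) (i : nat) : V := iter i s v.
Definition outcome_term (s : V -> V) (v : V) (i : nat) : R :=
  w G (play s v i) (play s v i.+1) *
  \prod_(j < i) lam G (play s v j) (play s v j.+1).
Definition outcome (s : V -> V) (v : V) : R :=
  limn (series (outcome_term s v)).

(* val(G)(v) = sup_{sigma_max} inf_{sigma_min} outcome (positional strategies) *)
Definition game_value (v : V) : R :=
  sup [set y | exists smax, max_strategy smax /\
     y = inf [set z | exists smin, min_strategy smin /\
                       z = outcome (join_strat smax smin) v]].

Definition ineq_H (x : V -> R) (v v' : V) : Prop :=
  if isMax G v then x v >= w G v v' + lam G v v' * x v'
  else x v <= w G v v' + lam G v v' * x v'.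
Definition solves_H (x : V -> R) : Prop :=
  forall v v', edge G v v' -> ineq_H x v v'.
Definition eq_H (x : V -> R) (v v' : V) : Prop :=
  x v = w G v v' + lam G v v' * x v'.

Definition offset (x : V -> R) (v v' : V) : R :=
  if isMax G v then x v - (w G v v' + lam G v v' * x v')
  else (w G v v' + lam G v v' * x v') - x v.
Definition f_sigma (s : V -> V) (x : V -> R) : R :=
  \sum_(v : V) offset x v (s v).

Definition is_basis_with_solution (B : {set V * V}) (x : V -> R) : Prop :=
  (forall e, e \in B -> edge G e.1 e.2) /\ #|B| = #|V| /\
  (forall y : V -> R, (forall e, e \in B -> eq_H y e.1 e.2) <-> y = x).
Definition basis_valuation (x : V -> R) : Prop :=
  (exists B, is_basis_with_solution B x) /\ solves_H x.

Definition optimal_for (s : V -> V) (nu : V -> R) : Prop :=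
  basis_valuation nu /\ forall x, solves_H x -> f_sigma s nu <= f_sigma s x.

Definition min_f (s : V -> V) : R := inf [set f_sigma s x | x in solves_H].
Definition better (s' s : V -> V) : Prop := min_f s' < min_f s.

End Game.

From HB Require Import structures.
From mathcomp Require Import all_boot all_order all_algebra.
From mathcomp Require Import all_classical all_reals all_analysis.
From mathcomp Require Import ring lra zify.
Import Order.TTheory GRing.Theory Num.Theory numFieldNormedType.Exports.
Local Open Scope ring_scope.
Local Open Scope classical_set_scope.

(* On the polyhedron [H] every offset is nonnegative, so [f_sigma >= 0] on [H], with
   equality exactly at the solutions that are tight on every edge chosen by [sigma].
   The Bellman operator is a sup-norm contraction of ratio [max lambda < 1]; its fixed
   point solves [H] and is tight along the strategy [sigma*] of optimal successors, so
   [min f_sigma* = 0]. Hence [sigma*] is better than any [sigma] with [f_sigma(nu) > 0],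
   and since "better" strictly decreases [min f_sigma] among finitely many joint
   strategies, every run terminates. A solution [nu] of [H] tight along [sigma] is the
   value: telescoping the discounted series shows that against the Min part of [sigma]
   every Max strategy gets at most [nu], while the Max part of [sigma] secures at least
   [nu], a saddle point. Finally [f_sigma] attains its minimum over [H] at a basis
   valuation: [H] contains no line, so from any solution one can move along the kernel
   of the tight inequations, without increasing [f_sigma], until a new inequation
   becomes tight and the rank grows; and there are finitely many bases. *)

Lemma sup_inf_saddle (R : realType) (A B : Type) (PA : A -> Prop) (PB : B -> Prop)
    (f : A -> B -> R) (m c : R) (a0 : A) (b0 : B) :
  PA a0 -> PB b0 -> (forall a b, PA a -> PB b -> m <= f a b) ->
  (forall b, PB b -> c <= f a0 b) -> (forall a, PA a -> f a b0 <= c) ->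
  sup [set y | exists a, PA a /\ y = inf [set z | exists b, PB b /\ z = f a b]] = c.
Proof.
move=> a0P b0P f_ge c_le le_c.
pose Z a := [set z | exists b, PB b /\ z = f a b].
have inf_le a : PA a -> inf (Z a) <= c.
  move=> aP; apply: le_trans (le_c a aP); apply: ge_inf; last by exists b0.
  by exists m => z [b [bP ->]]; exact: f_ge.
have inf_a0 : inf (Z a0) = c.
  apply/eqP; rewrite eq_le inf_le //=; apply: lb_le_inf; first by exists (f a0 b0), b0.
  by move=> z [b [bP ->]]; exact: c_le.
apply/eqP; rewrite eq_le; apply/andP; split.
  apply: ge_sup; first by exists c, a0; rewrite inf_a0.
  by move=> y [a [aP ->]]; exact: inf_le.
apply: ub_le_sup; last by exists a0; rewrite inf_a0.
by exists c => y [a [aP ->]]; exact: inf_le.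
Qed.

Lemma no_infinite_descent {disp} {T : porderType disp} {I : finType} (m : I -> T)
    (t : nat -> I) : (forall i, (m (t i.+1) < m (t i))%O) -> False.
Proof.
move=> decr; have m_decr := Order.NatMonotonyTheory.nhomo_ltn_lt decr.
have t_inj : injective (fun k : 'I_#|I|.+1 => t k).
  move=> k k' tkk'; apply/val_inj; case: (ltngtP k k') => // k_lt.
    by have := m_decr _ _ k_lt; rewrite /= tkk' ltxx.
  by have := m_decr _ _ k_lt; rewrite /= tkk' ltxx.
by have := leq_card _ t_inj; rewrite card_ord ltnn.
Qed.

Lemma rV_entry_le_norm {R : realType} {n} (r : 'rV[R]_n) i : `|r 0 i| <= `|r|.
Proof.
rewrite [`|r|]mx_normrE.
exact: (le_bigmax 0 (fun ij : 'I_1 * 'I_n => `|r ij.1 ij.2|) (0, i)).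
Qed.

Lemma rV_norm_le {R : realType} {n} (r : 'rV[R]_n) c :
  0 <= c -> (forall i, `|r 0 i| <= c) -> `|r| <= c.
Proof.
move=> c0 r_le; rewrite [`|r|]mx_normrE.
by apply: bigmax_le => // -[i j] _; rewrite (ord1 i).
Qed.

(* The join [completeNormedModType] of the two structures of ['rV[R]_n] is only
   inferred on an alias. *)
Definition complete_rV (R : realType) (n : nat) := 'rV[R]_n.
HB.instance Definition _ (R : realType) (n : nat) := NormedModule.on (complete_rV R n).
HB.instance Definition _ (R : realType) (n : nat) := Complete.on (complete_rV R n).

Lemma sup_contraction_fixpoint {R : realType} {V : finType} {f : (V -> R) -> V -> R}
    {L : R} : 0 <= L -> L < 1 ->
  (forall x y M, (forall u, `|x u - y u| <= M) -> forall v, `|f x v - f y v| <= L * M) ->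
  exists x, forall v, x v = f x v.
Proof.
move=> L0 L1 f_lip.
pose to_rV x : complete_rV R #|V| := \row_i x (enum_val i).
pose of_rV (r : complete_rV R #|V|) u := r 0 (enum_rank u).
pose F r := to_rV (f (of_rV r)).
have F_contraction : is_contraction (totalfun_ [set: complete_rV R #|V|] F).
  exists (NngNum L0); split => // -[a b] _ /=.
  apply: rV_norm_le => [|i]; first by rewrite mulr_ge0.
  rewrite !mxE; apply: f_lip => u.
  by have := rV_entry_le_norm (a - b) (enum_rank u); rewrite !mxE.
have [r _ rF] := banach_fixed_point F_contraction closedT (ex_intro _ 0 I).
by exists (of_rV r) => v; rewrite {1}rF /of_rV /= /F mxE enum_rankK.
Qed.

Section RowFamily.
Context {F : fieldType} {I : finType} {n : nat} (a : I -> 'rV[F]_n).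

Definition rowsmx (T : pred I) : 'M[F]_(#|I|, n) :=
  \matrix_(k, j) if T (enum_val k) then a (enum_val k) 0 j else 0.

Lemma row_rowsmx (T : pred I) k :
  row k (rowsmx T) = if T (enum_val k) then a (enum_val k) else 0.
Proof. by apply/rowP => j; rewrite !mxE; case: ifP; rewrite ?mxE. Qed.

Lemma row_rowsmx_rank {T : pred I} {i} :
  T i -> row (enum_rank i) (rowsmx T) = a i.
Proof. by rewrite row_rowsmx enum_rankK => ->. Qed.

Lemma rowsmx_mul0 (T : pred I) (d : 'cV_n) :
  (forall i, T i -> a i *m d = 0) -> rowsmx T *m d = 0.
Proof.
move=> ad0; apply/row_matrixP => k; rewrite row_mul row_rowsmx row0.
by case: ifP => [/ad0 | _]; rewrite ?mul0mx.
Qed.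

Lemma rowsmx_kernel {T : pred I} : (\rank (rowsmx T) < n)%N ->
  exists2 d : 'cV[F]_n, d != 0 & forall i, T i -> a i *m d = 0.
Proof.
move=> rank_lt; pose K := kermx (rowsmx T)^T.
have [j Kj] : exists j, row j K != 0.
  have K_neq0 : K != 0 by rewrite -mxrank_eq0 mxrank_ker mxrank_tr subn_eq0 -ltnNge.
  apply/existsP; apply: contraNT K_neq0; rewrite negb_exists => /forallP no_row.
  by apply/eqP/row_matrixP => j; rewrite row0; apply/eqP/negPn/no_row.
exists (row j K)^T; first by rewrite -trmx0 (inj_eq trmx_inj).
have Kj0 : rowsmx T *m (row j K)^T = 0.
  by rewrite -[rowsmx T]trmxK -trmx_mul -row_mul mulmx_ker row0 trmx0.
by move=> i Ti; rewrite -(row_rowsmx_rank Ti) -row_mul Kj0 row0.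
Qed.

Lemma rowsmx_rank_lt (T T' : pred I) (d : 'cV_n) i0 :
  (forall i, T i -> T' i) -> (forall i, T i -> a i *m d = 0) ->
  T' i0 -> a i0 *m d != 0 ->
  (\rank (rowsmx T) < \rank (rowsmx T'))%N.
Proof.
move=> TT' ad0 T'i0 ai0d; apply: rank_ltmx; rewrite ltmxE; apply/andP; split.
  apply/row_subP => k; rewrite row_rowsmx; case: ifP => [Tk | _]; last exact: sub0mx.
  by rewrite -(row_rowsmx_rank (TT' _ Tk)) row_sub.
apply: contra ai0d => /row_subP/(_ (enum_rank i0)); rewrite row_rowsmx_rank //.
by case/submxP => D ->; rewrite -mulmxA rowsmx_mul0 ?mulmx0.
Qed.

Lemma rowsmx_full_rank {T : pred I} : \rank (rowsmx T) = n ->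
  exists B : {set I}, [/\ forall i, i \in B -> T i, #|B| = n &
    forall d : 'cV_n, (forall i, i \in B -> a i *m d = 0) -> d = 0].
Proof.
move=> full; pose f := maxrankfun (rowsmx T); pose K := rowsub f (rowsmx T).
have K_free : row_free K := maxrowsub_free _.
have T_f k : T (enum_val (f k)).
  apply: contraTT K_free => notT; apply/row_freePn; exists k.
  by rewrite row_rowsub row_rowsmx (negbTE notT) sub0mx.
exists [set enum_val (f k) | k in 'I_(\rank (rowsmx T))]%SET; split.
- by move=> i /imsetP[k _ ->].
- by rewrite card_imset ?card_ord // => k k' /enum_val_inj/maxrankfun_inj.
move=> d Bd0; have Kd0 : K *m d = 0.
  apply/row_matrixP => k; rewrite row_mul row_rowsub row_rowsmx T_f row0.
  by apply: Bd0; apply/imsetP; exists k.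
have K_full : row_free K^T by rewrite /row_free mxrank_tr (eqP K_free) full.
apply: trmx_inj; apply: (row_free_inj K_full).
by rewrite -trmx_mul Kd0 !trmx0 mul0mx.
Qed.

End RowFamily.

Section Discounting.
Context {R : realType} {V : finType} (G : dpg R V) (wf : wf_dpg G).

Definition lam_max : R :=
  \big[Order.max/0]_(e : V * V | edge G e.1 e.2) lam G e.1 e.2.
Definition w_max : R :=
  \big[Order.max/0]_(e : V * V | edge G e.1 e.2) `|w G e.1 e.2|.

Lemma lam_ge0 v u : edge G v u -> 0 <= lam G v u.
Proof. by move=> e; case/andP: (wf.2 _ _ e). Qed.

Lemma lam_le_max v u : edge G v u -> lam G v u <= lam_max.
Proof.
exact: (@le_bigmax_cond _ _ _ 0 (v, u) (fun e : V * V => edge G e.1 e.2)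
          (fun e : V * V => lam G e.1 e.2)).
Qed.

Lemma lam_max_ge0 : 0 <= lam_max.
Proof. exact: bigmax_ge_id. Qed.

Lemma lam_max_lt1 : lam_max < 1.
Proof. by apply: bigmax_lt => // e /wf.2 /andP[]. Qed.

Lemma norm_lam_max_lt1 : `|lam_max| < 1.
Proof. by rewrite ger0_norm ?lam_max_ge0 ?lam_max_lt1. Qed.

Lemma norm_w_le_max v u : edge G v u -> `|w G v u| <= w_max.
Proof.
exact: (@le_bigmax_cond _ _ _ 0 (v, u) (fun e : V * V => edge G e.1 e.2)
          (fun e : V * V => `|w G e.1 e.2|)).
Qed.

Lemma w_max_ge0 : 0 <= w_max.
Proof. exact: bigmax_ge_id. Qed.

Variable t : V -> V.
Hypothesis jt : joint_strategy G t.

Definition discount (v : V) (i : nat) : R :=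
  \prod_(j < i) lam G (play t v j) (play t v j.+1).

Lemma playS v i : play t v i.+1 = t (play t v i).
Proof. exact: iterS. Qed.

Lemma edge_play v i : edge G (play t v i) (play t v i.+1).
Proof. by rewrite playS. Qed.

Lemma discountS v i :
  discount v i.+1 = discount v i * lam G (play t v i) (play t v i.+1).
Proof. exact: big_ord_recr. Qed.

Lemma discount_bound v i : 0 <= discount v i <= lam_max ^+ i.
Proof.
elim: i => [|i /andP[d0 dle]]; first by rewrite /discount big_ord0 lexx ler01.
rewrite discountS exprSr.
have e := edge_play v i.
by rewrite mulr_ge0 ?lam_ge0 //= ler_pM ?lam_ge0 ?lam_le_max.
Qed.

Lemma outcome_termE v i :
  outcome_term G t v i = w G (play t v i) (play t v i.+1) * discount v i.
Proof. by []. Qed.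

Lemma is_cvg_outcome v : cvgn (series (outcome_term G t v)).
Proof.
apply: normed_cvg; apply: (@series_le_cvg _ _ (geometric w_max lam_max)).
- by move=> n; rewrite /= normr_ge0.
- by move=> n; rewrite /= mulr_ge0 ?exprn_ge0 ?w_max_ge0 ?lam_max_ge0.
- move=> n /=; have /andP[d0 dle] := discount_bound v n.
  by rewrite outcome_termE normrM (ger0_norm d0) ler_pM ?norm_w_le_max ?edge_play.
- exact: is_cvg_geometric_series norm_lam_max_lt1.
Qed.

Definition slack (x : V -> R) (u : V) : R :=
  w G u (t u) + lam G u (t u) * x (t u) - x u.

Definition slack_term (x : V -> R) (v : V) (i : nat) : R :=
  slack x (play t v i) * discount v i.

Lemma series_outcome_telescope x v n :
  series (outcome_term G t v) n =
  x v - x (play t v n) * discount v n + series (slack_term x v) n.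
Proof.
elim: n => [|n IH].
  by rewrite !seriesEnat /= !big_geq // /discount big_ord0 mulr1 subrr addr0.
rewrite !seriesSr IH outcome_termE {3}/slack_term /slack -playS discountS.
ring.
Qed.

Lemma cvg_discounted_value x v :
  x (play t v n) * discount v n @[n --> \oo] --> 0.
Proof.
pose xm : R := \big[Order.max/0]_u `|x u|.
apply/cvgr0Pnorm_le => e e0.
have /cvgr0Pnorm_le/(_ e e0) := cvg_geometric xm norm_lam_max_lt1.
apply: filterS => n; apply: le_trans.
have /andP[d0 dle] := discount_bound v n.
have xm_ge : `|x (play t v n)| <= xm by exact: (le_bigmax 0 (fun u => `|x u|)).
rewrite normrM (ger0_norm d0) /= (le_trans _ (ler_norm _)) // ler_pM //.
Qed.

Lemma cvg_slack_series x v :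
  series (slack_term x v) @ \oo --> outcome G t v - x v.
Proof.
have -> : series (slack_term x v) = series (outcome_term G t v) - cst (x v) +
    (fun n => x (play t v n) * discount v n).
  by apply: funext => n; rewrite !fctE (series_outcome_telescope x); ring.
rewrite -[outcome G t v - x v]addr0.
exact: cvgD (cvgB (is_cvg_outcome v) (cvg_cst _)) (cvg_discounted_value x v).
Qed.

Lemma outcome_ge x v : (forall u, 0 <= slack x u) -> x v <= outcome G t v.
Proof.
move=> slack_ge0; rewrite -subr_ge0 -(cvg_lim _ (cvg_slack_series x v)) //.
apply: limr_ge; first exact: cvgP (cvg_slack_series x v).
apply: nearW => n; apply: sumr_ge0 => i _.
by rewrite mulr_ge0 //; case/andP: (discount_bound v i).
Qed.

Lemma outcome_le x v : (forall u, slack x u <= 0) -> outcome G t v <= x v.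
Proof.
move=> slack_le0; rewrite -subr_le0 -(cvg_lim _ (cvg_slack_series x v)) //.
apply: limr_le; first exact: cvgP (cvg_slack_series x v).
apply: nearW => n; apply: sumr_le0 => i _.
by rewrite mulr_le0_ge0 //; case/andP: (discount_bound v i).
Qed.

(* The constant valuation [-C] has nonnegative slack on every edge, as
   [(1 - lam) C >= (1 - lam_max) C = w_max]. *)
Lemma outcome_lbound v : - (w_max / (1 - lam_max)) <= outcome G t v.
Proof.
set C := w_max / (1 - lam_max).
have L1 : 0 < 1 - lam_max by rewrite subr_gt0 lam_max_lt1.
have C0 : 0 <= C by rewrite divr_ge0 ?w_max_ge0 ?ltW.
have CL : C * (1 - lam_max) = w_max by rewrite divfK ?gt_eqF.
apply: (outcome_ge (fun _ => - C)) => u; rewrite /slack.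
have e := jt u; have := lam_le_max _ _ e; have := lam_ge0 _ _ e.
have := lerNnormlW (norm_w_le_max _ _ e).
nra.
Qed.

End Discounting.

Section GameValue.
Context {R : realType} {V : finType} (G : dpg R V) (wf : wf_dpg G).

Lemma joint_join_strat {smax smin : V -> V} :
  max_strategy G smax -> min_strategy G smin -> joint_strategy G (join_strat G smax smin).
Proof.
move=> hmax hmin u; rewrite /join_strat.
by case: ifP => uMax; [apply: hmax | apply: hmin; rewrite uMax].
Qed.

Lemma game_value_of_tight s nu : joint_strategy G s -> solves_H G nu ->
  (forall v, eq_H G nu v (s v)) -> forall v, nu v = game_value G v.
Proof.
move=> js nuH tight v.
have s_max : max_strategy G s by move=> u _; exact: js.
have s_min : min_strategy G s by move=> u _; exact: js.
rewrite /game_value; apply/esym.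
apply: (@sup_inf_saddle _ _ _ _ _ _ (- (w_max G / (1 - lam_max G))) _ s s s_max s_min).
- by move=> smax smin hmax hmin; apply/outcome_lbound/joint_join_strat.
- move=> smin hmin; apply: (outcome_ge G wf _ (joint_join_strat s_max hmin)) => u.
  rewrite /slack /join_strat; case: ifP => uMax; first by rewrite -tight subrr.
  by have := nuH _ _ (hmin u (negbT uMax)); rewrite /ineq_H uMax subr_ge0.
- move=> smax hmax; apply: (outcome_le G wf _ (joint_join_strat hmax s_min)) => u.
  rewrite /slack /join_strat; case: ifP => uMax; last by rewrite -tight subrr.
  by have := nuH _ _ (hmax u uMax); rewrite /ineq_H uMax subr_le0.
Qed.

End GameValue.

Section Bellman.
Context {R : realType} {V : finType} (G : dpg R V) (wf : wf_dpg G).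

Definition step_value (x : V -> R) (v u : V) : R := w G v u + lam G v u * x u.

Definition some_succ (v : V) : V := odflt v [pick u | edge G v u].

Lemma edge_some_succ v : edge G v (some_succ v).
Proof.
rewrite /some_succ; case: pickP => //= no_succ.
by have [u] := wf.1 v; rewrite no_succ.
Qed.

Definition bellman_succ (x : V -> R) (v : V) : V :=
  if isMax G v then Order.arg_max (some_succ v) (edge G v) (step_value x v)
  else Order.arg_min (some_succ v) (edge G v) (step_value x v).

Definition bellman (x : V -> R) (v : V) : R := step_value x v (bellman_succ x v).

Lemma bellman_succP x v : edge G v (bellman_succ x v) /\
  forall u, edge G v u -> if isMax G v then step_value x v u <= bellman x v
                          else bellman x v <= step_value x v u.
Proof.
rewrite /bellman /bellman_succ; case: ifP => _.
  by case: arg_maxP; first exact: edge_some_succ.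
by case: arg_minP; first exact: edge_some_succ.
Qed.

Lemma bellman_lipschitz x y M : (forall u, `|x u - y u| <= M) ->
  forall v, `|bellman x v - bellman y v| <= lam_max G * M.
Proof.
move=> xy_le v; have M0 : 0 <= M := le_trans (normr_ge0 _) (xy_le v).
have step_le u :
    edge G v u -> `|step_value x v u - step_value y v u| <= lam_max G * M.
  move=> e; have l0 := lam_ge0 G wf _ _ e.
  have -> : step_value x v u - step_value y v u = lam G v u * (x u - y u).
    by rewrite /step_value; ring.
  by rewrite normrM (ger0_norm l0) ler_pM ?lam_le_max.
have [ex x_opt] := bellman_succP x v; have [ey y_opt] := bellman_succP y v.
have := step_le _ ex; have := step_le _ ey; rewrite !ler_norml.
move: (x_opt _ ey) (y_opt _ ex); rewrite /bellman.
by case: ifP => _; lra.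
Qed.

Lemma exists_tight_strategy : exists s x,
  joint_strategy G s /\ solves_H G x /\ forall v, eq_H G x v (s v).
Proof.
have [x x_fix] :=
  sup_contraction_fixpoint (lam_max_ge0 G) (lam_max_lt1 G wf) bellman_lipschitz.
exists (bellman_succ x), x; split; [|split].
- by move=> v; case: (bellman_succP x v).
- move=> v u e; rewrite /ineq_H (x_fix v); have [_ /(_ u e)] := bellman_succP x v.
  by case: ifP.
- by move=> v; rewrite /eq_H {1}x_fix.
Qed.

End Bellman.

Section Polyhedron.
Context {R : realType} {V : finType} (G : dpg R V) (wf : wf_dpg G).

Definition edge_form (e : V * V) (x : V -> R) : R :=
  x e.1 - lam G e.1 e.2 * x e.2.

Lemma edge_formB e x y : edge_form e (x - y) = edge_form e x - edge_form e y.
Proof. by rewrite /edge_form !fctE; ring. Qed.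

Lemma edge_formN e x : edge_form e (- x) = - edge_form e x.
Proof. by rewrite /edge_form !fctE; ring. Qed.

Definition orient (v : V) : R := if isMax G v then 1 else -1.

Lemma orient_neq0 v : orient v != 0.
Proof. by rewrite /orient; case: ifP; rewrite ?oppr_eq0 oner_eq0. Qed.

Lemma offsetE x v u : offset G x v u = orient v * (edge_form (v, u) x - w G v u).
Proof. by rewrite /offset /orient /edge_form /=; case: ifP => _; ring. Qed.

Lemma ineq_H_offset x v u : ineq_H G x v u <-> 0 <= offset G x v u.
Proof. by rewrite /ineq_H /offset; case: ifP; rewrite subr_ge0. Qed.

Lemma eq_H_edge_form x e : eq_H G x e.1 e.2 <-> edge_form e x = w G e.1 e.2.
Proof. by rewrite /eq_H /edge_form; split => [-> | <-]; ring. Qed.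

Lemma eq_H_offset x v u : eq_H G x v u <-> offset G x v u = 0.
Proof.
rewrite (eq_H_edge_form x (v, u)) offsetE.
split => [-> | /eqP]; first by rewrite subrr mulr0.
by rewrite mulf_eq0 (negbTE (orient_neq0 v)) subr_eq0 => /eqP.
Qed.

Lemma f_sigma_ge0 {s x} : joint_strategy G s -> solves_H G x -> 0 <= f_sigma G s x.
Proof. by move=> js xH; apply: sumr_ge0 => v _; apply/ineq_H_offset/xH. Qed.

Lemma f_sigma_eq0P {s x} : joint_strategy G s -> solves_H G x ->
  f_sigma G s x = 0 <-> forall v, eq_H G x v (s v).
Proof.
move=> js xH; split => [f0 v | tight]; last first.
  by rewrite /f_sigma big1 // => v _; apply/eq_H_offset.
apply/eq_H_offset; apply: (psumr_eq0P _ f0) => // u _.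
exact/ineq_H_offset/xH.
Qed.

Lemma min_fE {s nu} : solves_H G nu ->
  (forall x, solves_H G x -> f_sigma G s nu <= f_sigma G s x) ->
  min_f G s = f_sigma G s nu.
Proof.
move=> nuH nu_min; apply/eqP; rewrite eq_le; apply/andP; split.
  apply: ge_inf; last by exists nu.
  by exists (f_sigma G s nu) => _ [x xH <-]; exact: nu_min.
by apply: lb_le_inf; [exists (f_sigma G s nu), nu | move=> _ [x xH <-]; exact: nu_min].
Qed.

Lemma min_f_tight {s x} : joint_strategy G s -> solves_H G x ->
  (forall v, eq_H G x v (s v)) -> min_f G s = 0.
Proof.
move=> js xH x_tight; have f0 : f_sigma G s x = 0 by apply/(f_sigma_eq0P js xH).
by rewrite (min_fE xH) // => y yH; rewrite f0 f_sigma_ge0.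
Qed.

Definition rate (e : V * V) (d : V -> R) : R := orient e.1 * edge_form e d.

Lemma offsetD x t d v u :
  offset G (fun u => x u + t * d u) v u = offset G x v u + t * rate (v, u) d.
Proof. by rewrite !offsetE /rate /edge_form /=; ring. Qed.

Definition f_rate (s : V -> V) (d : V -> R) : R := \sum_v rate (v, s v) d.

Lemma f_sigmaD s x t d :
  f_sigma G s (fun u => x u + t * d u) = f_sigma G s x + t * f_rate s d.
Proof.
rewrite /f_sigma /f_rate mulr_sumr -big_split /=.
by apply: eq_bigr => v _; rewrite offsetD.
Qed.

Lemma rateN e d : rate e (- d) = - rate e d.
Proof. by rewrite /rate edge_formN mulrN. Qed.

Lemma f_rateN s d : f_rate s (- d) = - f_rate s d.
Proof. by rewrite /f_rate -sumrN; apply: eq_bigr => v _; rewrite rateN. Qed.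

(* At a vertex [u] where [|d|] is maximal, an edge [(u, v)] gives
   [|d u| = lam |d v| <= lam |d u|] with [lam < 1]. *)
Lemma edge_form_eq0 d :
  (forall v u, edge G v u -> edge_form (v, u) d = 0) -> d = 0.
Proof.
move=> d_hom; apply/funext => u1.
have [u0 _ u0_max] := @arg_maxP _ _ _ u1 xpredT (fun u => `|d u|) isT.
have [v e] := wf.1 u0; have /andP[l0 l1] := wf.2 _ _ e.
have du0 : d u0 = lam G u0 v * d v.
  by apply/eqP; rewrite -subr_eq0; apply/eqP/d_hom.
have : `|d u0| <= lam G u0 v * `|d u0|.
  by rewrite {1}du0 normrM (ger0_norm l0) ler_wpM2l //; apply: u0_max.
have := u0_max u1 isT; have := normr_ge0 (d u0) => /= ? ? ?.
suff : `|d u1| <= 0 by rewrite normr_le0 => /eqP.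
nra.
Qed.

Lemma ratio_test {x d} :
  solves_H G x -> (exists v u, edge G v u /\ rate (v, u) d < 0) ->
  exists2 t, 0 <= t & solves_H G (fun u => x u + t * d u) /\
    exists v u, [/\ edge G v u, rate (v, u) d < 0
                  & offset G (fun u => x u + t * d u) v u = 0].
Proof.
move=> xH [v0 [u0 [e0 r0]]].
pose J e := edge G e.1 e.2 && (rate e d < 0).
pose ratio e := offset G x e.1 e.2 / - rate e d.
have J0 : J (v0, u0) by rewrite /J e0 r0.
case: (@arg_minP _ _ _ (v0, u0) J ratio J0) => -[v u] /andP[/= e r_lt0] ratio_min.
have off_ge0 v' u' : edge G v' u' -> 0 <= offset G x v' u' by move/xH/ineq_H_offset.
exists (ratio (v, u)); first by rewrite divr_ge0 ?off_ge0 // oppr_ge0 ltW.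
split; last first.
  exists v, u; split => //; rewrite offsetD /ratio /=.
  by field; rewrite lt_eqF.
move=> v' u' e'; apply/ineq_H_offset; rewrite offsetD.
have := off_ge0 _ _ e'; case: (leP 0 (rate (v', u') d)) => r'.
  by move=> ?; rewrite addr_ge0 // mulr_ge0 // divr_ge0 ?off_ge0 // oppr_ge0 ltW.
have := ratio_min (v', u'); rewrite /J /ratio /= e' r' => /(_ isT).
by rewrite ler_pdivlMr ?oppr_gt0 // mulrN; lra.
Qed.

Definition cvof (x : V -> R) : 'cV[R]_#|V| := \col_i x (enum_val i).
Definition ofcv (d : 'cV[R]_#|V|) (u : V) : R := d (enum_rank u) 0.

Lemma ofcvK : cancel ofcv cvof.
Proof. by move=> d; apply/colP => i; rewrite mxE /ofcv enum_valK. Qed.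

Lemma cvof0 : cvof 0 = 0.
Proof. by apply/colP => i; rewrite !mxE. Qed.

Definition edge_row (e : V * V) : 'rV[R]_#|V| :=
  'e_(enum_rank e.1) - lam G e.1 e.2 *: 'e_(enum_rank e.2).

Lemma edge_row_mul e x : edge_row e *m cvof x = (edge_form e x)%:M.
Proof.
rewrite mulmxBl -scalemxAl -!rowE; apply/matrixP => i j.
by rewrite !ord1 !mxE !enum_rankK eqxx mulr1n.
Qed.

Lemma edge_row_mul_eq0 e x : (edge_row e *m cvof x == 0) = (edge_form e x == 0).
Proof.
rewrite edge_row_mul; apply/eqP/eqP => [/matrixP/(_ 0 0) | ->].
  by rewrite !mxE eqxx mulr1n.
by apply/matrixP => i j; rewrite !mxE mul0rn.
Qed.

Definition tight (x : V -> R) : pred (V * V) :=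
  fun e => edge G e.1 e.2 && (offset G x e.1 e.2 == 0).

Lemma tight_eq_H {x e} : tight x e -> edge G e.1 e.2 /\ eq_H G x e.1 e.2.
Proof. by case/andP => e_edge /eqP/eq_H_offset. Qed.

Definition tight_rank (x : V -> R) : nat := \rank (rowsmx edge_row (tight x)).

Lemma tight_basis x : tight_rank x = #|V| ->
  exists B, is_basis_with_solution G B x.
Proof.
move=> full; have [B [B_tight cardB B_inj]] := rowsmx_full_rank _ full.
exists B; split; [by move=> e /B_tight/tight_eq_H[] | split => // y].
split => [y_eq | ->]; last by move=> e /B_tight/tight_eq_H[].
have : cvof (y - x) = 0.
  apply: B_inj => e eB; apply/eqP; rewrite edge_row_mul_eq0 edge_formB subr_eq0.
  have [_ /eq_H_edge_form ->] := tight_eq_H (B_tight _ eB).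
  by have /eq_H_edge_form -> := y_eq _ eB.
move/colP => yx0; apply/funext => u; apply/eqP; rewrite -subr_eq0.
by have := yx0 (enum_rank u); rewrite !mxE enum_rankK !fctE => ->.
Qed.

Lemma basis_solution_uniq {B x y} :
  is_basis_with_solution G B x -> is_basis_with_solution G B y -> x = y.
Proof. by move=> [_ [_ Bx]] [_ [_ By]]; apply/By/Bx. Qed.

Section Strategy.
Variables (s : V -> V) (js : joint_strategy G s).

(* Otherwise [x + t d] stays in [H] for every [t >= 0], while [f_sigma] decreases
   without bound. *)
Lemma exists_rate_lt0 {x d} : solves_H G x -> f_rate s d < 0 ->
  exists v u, edge G v u /\ rate (v, u) d < 0.
Proof.
move=> xH fr_lt0.
case: (pselect (exists v u, edge G v u /\ rate (v, u) d < 0)) => // no_edge; exfalso.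
have rate_ge0 v u : edge G v u -> 0 <= rate (v, u) d.
  by move=> e; rewrite leNgt; apply/negP => r; apply: no_edge; exists v, u.
pose t := f_sigma G s x / - f_rate s d + 1.
have t_ge0 : 0 <= t by rewrite addr_ge0 // divr_ge0 ?(f_sigma_ge0 js xH) // oppr_ge0 ltW.
have x'H : solves_H G (fun u => x u + t * d u).
  move=> v u e; apply/ineq_H_offset; rewrite offsetD addr_ge0 //.
    exact/ineq_H_offset/xH.
  exact: mulr_ge0 t_ge0 (rate_ge0 _ _ e).
have := f_sigma_ge0 js x'H; rewrite f_sigmaD.
have -> : f_sigma G s x + t * f_rate s d = f_rate s d.
  by rewrite /t; field; rewrite lt_eqF.
by rewrite leNgt fr_lt0.
Qed.

Lemma descent_direction {x d} : solves_H G x -> d != 0 -> exists d',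
  [/\ d' = d \/ d' = - d, f_rate s d' <= 0
     & exists v u, edge G v u /\ rate (v, u) d' < 0].
Proof.
move=> xH d_neq0; case: (ltrgtP (f_rate s d) 0) => [fr_lt0 | fr_gt0 | fr0].
- by exists d; split; [left | exact: ltW | exact: exists_rate_lt0 xH fr_lt0].
- exists (- d); rewrite f_rateN oppr_le0 ltW //; split => //; first by right.
  by apply: exists_rate_lt0 xH _; rewrite f_rateN oppr_lt0.
have [v [u [e r_neq0]]] : exists v u, edge G v u /\ rate (v, u) d != 0.
  case: (pselect (exists v u, edge G v u /\ rate (v, u) d != 0)) => // no_edge.
  case/eqP: d_neq0; apply: edge_form_eq0 => v u e; apply/eqP/negPn/negP => ef.
  by apply: no_edge; exists v, u; rewrite /rate mulf_neq0 ?orient_neq0.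
case: (ltrgtP (rate (v, u) d) 0) => [r_lt0 | r_gt0 | r0].
- by exists d; split; [left | rewrite fr0 | exists v, u].
- exists (- d); split; [by right | by rewrite f_rateN fr0 oppr0 |].
  by exists v, u; rewrite rateN oppr_lt0.
- by rewrite r0 eqxx in r_neq0.
Qed.

Lemma pivot_step {x} : solves_H G x -> (tight_rank x < #|V|)%N ->
  exists x', [/\ solves_H G x', f_sigma G s x' <= f_sigma G s x
                & (tight_rank x < tight_rank x')%N].
Proof.
move=> xH rank_lt; have [D D_neq0 D_ker] := rowsmx_kernel _ rank_lt.
rewrite -(ofcvK D) in D_neq0 D_ker; set d := ofcv D in D_neq0 D_ker.
have d_neq0 : d != 0 by apply: contraNneq D_neq0 => ->; rewrite cvof0.
have [d' [d'_pm fr_le0 neg_edge]] := descent_direction xH d_neq0.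
have [t t_ge0 [x'H [v [u [e r_lt0 off0]]]]] := ratio_test xH neg_edge.
have form0 e' : tight x e' -> edge_form e' d' = 0.
  move=> /D_ker/eqP; rewrite edge_row_mul_eq0 => /eqP form_d0.
  by case: d'_pm => ->; rewrite ?edge_formN form_d0 ?oppr0.
exists (fun u => x u + t * d' u); split => //.
  by rewrite f_sigmaD gerDl mulr_ge0_le0.
apply: (rowsmx_rank_lt _ _ _ (cvof d') (v, u)).
- move=> [a b] /[dup] /form0 f0 /andP[ab /eqP off].
  by rewrite /tight /= ab offsetD off /rate f0 !mulr0 addr0 eqxx.
- by move=> e' /form0/eqP; rewrite -edge_row_mul_eq0 => /eqP.
- by rewrite /tight /= e off0 eqxx.
- by rewrite edge_row_mul_eq0; apply: contraTneq r_lt0 => f0; rewrite /rate f0 mulr0 ltxx.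
Qed.

Lemma exists_basis_valuation_le {x} : solves_H G x ->
  exists nu, basis_valuation G nu /\ f_sigma G s nu <= f_sigma G s x.
Proof.
have [k] := ubnP (#|V| - tight_rank x)%N; elim: k x => // k IH x rank_def xH.
case: (ltnP (tight_rank x) #|V|) => [rank_lt | rank_ge].
  have [x' [x'H f_le rank_lt']] := pivot_step xH rank_lt.
  have [|nu [nu_basis nu_le]] := IH x' _ x'H.
    by have := rank_leq_col (rowsmx edge_row (tight x')); rewrite -/(tight_rank x'); lia.
  by exists nu; split => //; apply: le_trans f_le.
have [B xB] : exists B, is_basis_with_solution G B x.
  by apply/tight_basis/eqP; rewrite eqn_leq rank_leq_col.
by exists x; split; [split; [exists B |] |].
Qed.

Lemma exists_optimal : (exists x, solves_H G x) -> exists nu, optimal_for G s nu.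
Proof.
case=> x0 x0H.
pose basis_sol B : set (V -> R) :=
  [set x | is_basis_with_solution G B x /\ solves_H G x].
pose P B := `[< exists x, basis_sol B x >].
pose xB B := xget 0 (basis_sol B).
have xBP B : P B -> basis_sol B (xB B) by move/asboolP; apply: xgetPex.
have [nu0 [[[B0 B0nu0] nu0H] _]] := exists_basis_valuation_le x0H.
have P0 : P B0 by apply/asboolP; exists nu0.
case: (@arg_minP _ _ _ B0 P (fun B => f_sigma G s (xB B)) P0).
move=> Bm /xBP[Bm_basis Bm_H] Bm_min.
exists (xB Bm); split; first by split => //; exists Bm.
move=> x xH; have [nu [[[B Bnu] nuH] nu_le]] := exists_basis_valuation_le xH.
have PB : P B by apply/asboolP; exists nu.
apply: le_trans (Bm_min _ PB) _; have [B_xB _] := xBP _ PB.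
by rewrite (basis_solution_uniq B_xB Bnu).
Qed.

End Strategy.

End Polyhedron.

Theorem corollary3p4 (R : realType) (V : finType) (G : dpg R V) :
  wf_dpg G ->
  (* the step "compute an optimal solution nu for f_sigma" is always possible *)
  (forall s, joint_strategy G s -> exists nu, optimal_for G s nu) /\
  (* if f_sigma(nu) <> 0, a better joint strategy exists (the procedure never gets stuck) *)
  (forall s nu, joint_strategy G s -> optimal_for G s nu -> f_sigma G s nu <> 0 ->
     exists s', joint_strategy G s' /\ better G s' s) /\
  (* termination: there is no infinite run of the procedure *)
  ~ (exists (ss : nat -> V -> V) (nus : nat -> V -> R),
       forall i, joint_strategy G (ss i) /\ optimal_for G (ss i) (nus i) /\
                 f_sigma G (ss i) (nus i) <> 0 /\ better G (ss i.+1) (ss i)) /\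
  (* correctness: any returned valuation is val(G) *)
  (forall s nu, joint_strategy G s -> optimal_for G s nu -> f_sigma G s nu = 0 ->
     forall v, nu v = game_value G v).
Proof.
move=> wf; have [s0 [x0 [js0 [x0H x0_tight]]]] := exists_tight_strategy G wf.
have min_f_s0 : min_f G s0 = 0 := min_f_tight G js0 x0H x0_tight.
split; [|split; [|split]].
- by move=> s js; apply: (exists_optimal G wf _ js); exists x0.
- move=> s nu js [[_ nuH] nu_min] f_neq0; exists s0; split => //.
  rewrite /better min_f_s0 (min_fE G nuH nu_min) lt0r (f_sigma_ge0 G js nuH) andbT.
  exact/eqP.
- move=> [ss [nus run]].
  have ffunK j : (finfun (ss j) : V -> V) = ss j by apply/funext => v; rewrite ffunE.
  apply: (no_infinite_descent (fun f : {ffun V -> V} => min_f G f) (finfun \o ss)) => i.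
  by rewrite /= !ffunK; have [_ [_ [_]]] := run i.
- move=> s nu js [[_ nuH] _] f0; apply: (game_value_of_tight G wf _ _ js nuH).
  exact/(f_sigma_eq0P G js nuH).
Qed.
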